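(* Let $g:[0,1)\to\mathbb{R}$ be the function defined in the context, and let $g'(0)$ denote its right derivative at $0$. If $C'(0)<Py_H-Py_L$, then $g'(0)>0$ (and consequently every maximizer $a^*$ of $g$ on $[0,1)$ satisfies $a^*>0$). Further, if $0\le\beta\le u$, then $g'(0)>0$ holds only if $C'(0)<Py_H-Py_L$.
   Context: Fix $P>0$, $y_H>y_L\ge 0$, a real number $u$ and $\gamma\in(0,1]$. Let $C:[0,1)\to\mathbb{R}$ satisfy $C(0)=0$, $C$ increasing, strictly convex, twice differentiable, $C(a)\to\infty$ as $a\to1$. Let $\eta:[0,\infty)\to\mathbb{R}$ be strictly convex, increasing, twice differentiable with $\eta(0)=0$, and let $\beta\ge0$ satisfy $\gamma\eta'(\beta)=1$ (assumed to exist). For $a\in[0,1)$ define $w_L^*(a)=\max\{0,u-aC'(a)+C(a)\}$, $w_H^*(a)=w_L^*(a)+C'(a)$, $b_i^*(a)=\min\{\beta,w_i^*(a)\}$ for $i\in\{H,L\}$, and $g(a)=a\,(Py_H-w_H^*(a)+b_H^*(a)-\gamma\eta(b_H^*(a)))+(1-a)\,(Py_L-w_L^*(a)+b_L^*(a)-\gamma\eta(b_L^*(a)))$. (These are the optimal wages and thefts inducing effort $a$ in the one-shot wage-theft principal–agent problem, and $g(a)$ is the employer's resulting profit.) *)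

From Stdlib Require Import Reals Lra.
Open Scope R_scope.

Definition I01 (a : R) : Prop := 0 <= a /\ a < 1.
Definition Ipos (x : R) : Prop := 0 <= x.

Definition deriv_within (D : R -> Prop) (f : R -> R) (x l : R) : Prop :=
  forall eps, 0 < eps -> exists delta, 0 < delta /\
    forall y, D y -> Rabs (y - x) < delta ->
      Rabs (f y - f x - l * (y - x)) <= eps * Rabs (y - x).

Definition right_deriv (f : R -> R) (x l : R) : Prop :=
  forall eps, 0 < eps -> exists delta, 0 < delta /\
    forall h, 0 < h -> h < delta -> Rabs ((f (x + h) - f x) / h - l) <= eps.

Definition strictly_increasing_on (D : R -> Prop) (f : R -> R) : Prop :=
  forall x y, D x -> D y -> x < y -> f x < f y.

Definition strictly_convex_on (D : R -> Prop) (f : R -> R) : Prop :=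
  forall x y t, D x -> D y -> x <> y -> 0 < t -> t < 1 ->
    f (t * x + (1 - t) * y) < t * f x + (1 - t) * f y.

Definition tends_to_infty_at_1 (f : R -> R) : Prop :=
  forall M, exists delta, 0 < delta /\
    forall a, 1 - delta < a -> a < 1 -> M < f a.

(* Optimal wages and thefts; Cp plays the role of C'. *)
Definition wL (u : R) (C Cp : R -> R) (a : R) : R :=
  Rmax 0 (u - a * Cp a + C a).
Definition wH (u : R) (C Cp : R -> R) (a : R) : R :=
  wL u C Cp a + Cp a.
Definition bstar (beta w : R) : R := Rmin beta w.

Definition gfun (P yH yL u gamma beta : R) (C Cp eta : R -> R) (a : R) : R :=
  let wh := wH u C Cp a in
  let wl := wL u C Cp a in
  let bh := bstar beta wh in
  let bl := bstar beta wl in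
  a * (P * yH - wh + bh - gamma * eta bh)
  + (1 - a) * (P * yL - wl + bl - gamma * eta bl).

From Stdlib Require Import Reals Lra Psatz.
Open Scope R_scope.

(* Write the profit as g(a) = P yL - F(wL a) + a (P yH - P yL - F(wH a) + F(wL a)), where
   F w = w - b + gamma eta(b), b = min(beta, w), is the net cost of paying the wage w.  On
   [0, beta] the chord slopes of gamma eta are at most gamma eta'(beta) = 1 by convexity, so F
   is nondecreasing and 1-Lipschitz on [0, oo).  The envelope term C(a) - a C'(a) in wL has
   derivative C'(0) - C'(0) = 0 at 0, so F(wL a) - F(wL 0) = o(a) and
   g'(0) = P yH - P yL - F(wH 0) + F(wL 0) >= P yH - P yL - C'(0), as wH 0 - wL 0 = C'(0).
   When beta <= u both wages at a = 0 are at least beta, where F has slope exactly 1, so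
   g'(0) = P yH - P yL - C'(0). *)

Definition littleo_right (r f : R -> R) : Prop :=
  forall eps, 0 < eps -> exists delta, 0 < delta /\
    forall h, 0 < h -> h < delta -> Rabs (f h) <= eps * r h.

Lemma littleo_right_le r f g :
  littleo_right r f -> (forall h, 0 < h -> h < 1 -> Rabs (g h) <= Rabs (f h)) ->
  littleo_right r g.
Proof.
  intros Hf Hgf eps Heps.
  destruct (Hf eps Heps) as [d [Hd Hfd]].
  exists (Rmin d 1); split; [apply Rmin_pos; lra|].
  intros h Hh Hhd.
  pose proof (Rmin_l d 1); pose proof (Rmin_r d 1).
  apply Rle_trans with (Rabs (f h)); [apply Hgf | apply Hfd]; lra.
Qed.

Lemma littleo_right_opp r f :
  littleo_right r f -> littleo_right r (fun h => - f h).
Proof.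
  intros Hf; apply (littleo_right_le _ _ _ Hf).
  intros; rewrite Rabs_Ropp; lra.
Qed.

Lemma littleo_right_plus r f g :
  littleo_right r f -> littleo_right r g -> littleo_right r (fun h => f h + g h).
Proof.
  intros Hf Hg eps Heps.
  destruct (Hf (eps / 2)) as [d1 [Hd1 Hf1]]; [lra|].
  destruct (Hg (eps / 2)) as [d2 [Hd2 Hg2]]; [lra|].
  exists (Rmin d1 d2); split; [now apply Rmin_pos|].
  intros h Hh Hhd.
  pose proof (Rmin_l d1 d2); pose proof (Rmin_r d1 d2).
  specialize (Hf1 h Hh ltac:(lra)); specialize (Hg2 h Hh ltac:(lra)).
  pose proof (Rabs_triang (f h) (g h)); lra.
Qed.

Lemma littleo_right_mul_id f :
  littleo_right (fun _ => 1) f -> littleo_right (fun h => h) (fun h => h * f h).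
Proof.
  intros Hf eps Heps.
  destruct (Hf eps Heps) as [d [Hd Hfd]].
  exists d; split; [exact Hd|].
  intros h Hh Hhd.
  specialize (Hfd h Hh Hhd).
  rewrite Rabs_mult, (Rabs_pos_eq h) by lra; nra.
Qed.

Lemma littleo_right_id_1 f :
  littleo_right (fun h => h) f -> littleo_right (fun _ => 1) f.
Proof.
  intros Hf eps Heps.
  destruct (Hf eps Heps) as [d [Hd Hfd]].
  exists (Rmin d 1); split; [apply Rmin_pos; lra|].
  intros h Hh Hhd.
  pose proof (Rmin_l d 1); pose proof (Rmin_r d 1).
  specialize (Hfd h Hh ltac:(lra)); nra.
Qed.

Lemma littleo_right_linear c : littleo_right (fun _ => 1) (fun h => c * h).
Proof.
  intros eps Heps.
  pose proof (Rabs_pos c).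
  exists (eps / (Rabs c + 1)); split; [apply Rdiv_lt_0_compat; lra|].
  intros h Hh Hhd.
  assert (Hbound : (Rabs c + 1) * h <= eps).
  { apply Rmult_lt_compat_l with (r := Rabs c + 1) in Hhd; [|lra].
    replace ((Rabs c + 1) * (eps / (Rabs c + 1))) with eps in Hhd by (field; lra).
    lra. }
  rewrite Rabs_mult, (Rabs_pos_eq h) by lra; nra.
Qed.

Lemma deriv_within_I01_littleo f l :
  deriv_within I01 f 0 l -> littleo_right (fun h => h) (fun h => f h - f 0 - l * h).
Proof.
  intros Hf eps Heps.
  destruct (Hf eps Heps) as [d [Hd Hfd]].
  exists (Rmin d 1); split; [apply Rmin_pos; lra|].
  intros h Hh Hhd.
  pose proof (Rmin_l d 1); pose proof (Rmin_r d 1).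
  specialize (Hfd h ltac:(unfold I01; lra)).
  rewrite Rminus_0_r, (Rabs_pos_eq h) in Hfd by lra.
  apply Hfd; lra.
Qed.

Lemma deriv_within_I01_continuous f l :
  deriv_within I01 f 0 l -> littleo_right (fun _ => 1) (fun h => f h - f 0).
Proof.
  intros Hf.
  apply (littleo_right_le _ (fun h => (f h - f 0 - l * h) + l * h)).
  - apply littleo_right_plus; [|apply littleo_right_linear].
    exact (littleo_right_id_1 _ (deriv_within_I01_littleo _ _ Hf)).
  - intros h _ _; right; f_equal; ring.
Qed.

Lemma right_deriv_of_littleo g D :
  littleo_right (fun h => h) (fun h => g h - g 0 - D * h) -> right_deriv g 0 D.
Proof.
  intros Hg eps Heps.
  destruct (Hg eps Heps) as [d [Hd Hgd]].
  exists d; split; [exact Hd|].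
  intros h Hh Hhd.
  specialize (Hgd h Hh Hhd).
  rewrite Rplus_0_l.
  replace ((g h - g 0) / h - D) with ((g h - g 0 - D * h) / h) by (field; lra).
  unfold Rdiv; rewrite Rabs_mult, Rabs_inv, (Rabs_pos_eq h) by lra.
  apply Rmult_le_reg_r with h; [lra|].
  rewrite Rmult_assoc, Rinv_l by lra; lra.
Qed.

Lemma right_deriv_pos_increase g D :
  right_deriv g 0 D -> 0 < D -> exists h, 0 < h < 1 /\ g 0 < g h.
Proof.
  intros Hg HD.
  destruct (Hg (D / 2)) as [d [Hd Hgd]]; [lra|].
  set (h := Rmin d 1 / 2).
  assert (Hh : 0 < h < d /\ h < 1).
  { pose proof (Rmin_l d 1); pose proof (Rmin_r d 1); pose proof (Rmin_pos d 1 Hd ltac:(lra)).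
    unfold h; lra. }
  exists h; split; [lra|].
  specialize (Hgd h ltac:(lra) ltac:(lra)).
  rewrite Rplus_0_l in Hgd.
  pose proof (Rle_abs (- ((g h - g 0) / h - D))) as Habs.
  rewrite Rabs_Ropp in Habs.
  assert (Hquot : 0 < (g h - g 0) / h) by lra.
  assert (Hdiff : g h - g 0 = (g h - g 0) / h * h) by (field; lra).
  pose proof (Rmult_lt_0_compat _ h Hquot ltac:(lra)); lra.
Qed.

Lemma deriv_within_I01_nonneg f fp :
  strictly_increasing_on I01 f -> (forall a, I01 a -> deriv_within I01 f a (fp a)) ->
  forall a, I01 a -> 0 <= fp a.
Proof.
  intros Hinc Hf a Ha.
  destruct (Rle_dec 0 (fp a)) as [|Hneg]; [assumption|exfalso].
  destruct (Hf a Ha (- fp a / 2)) as [d [Hd Hfd]]; [lra|].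
  destruct Ha as [Ha0 Ha1].
  set (k := Rmin d (1 - a) / 2).
  assert (Hk : 0 < k < d /\ k < 1 - a).
  { pose proof (Rmin_l d (1 - a)); pose proof (Rmin_r d (1 - a));
    pose proof (Rmin_pos d (1 - a) Hd ltac:(lra)); unfold k; lra. }
  specialize (Hfd (a + k) ltac:(unfold I01; lra)).
  replace (a + k - a) with k in Hfd by ring.
  rewrite (Rabs_pos_eq k) in Hfd by lra.
  specialize (Hfd ltac:(lra)).
  pose proof (Rle_abs (f (a + k) - f a - fp a * k)).
  pose proof (Hinc a (a + k) ltac:(unfold I01; lra) ltac:(unfold I01; lra) ltac:(lra)).
  nra.
Qed.

Definition slope (f : R -> R) (x y : R) : R := (f y - f x) / (y - x).

Lemma strictly_convex_slope_le f x y z :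
  strictly_convex_on Ipos f -> 0 <= x -> x < y -> y < z -> slope f x y <= slope f y z.
Proof.
  intros Hf Hx Hxy Hyz.
  set (t := (z - y) / (z - x)).
  assert (Ht : t * (z - x) = z - y) by (unfold t; field; lra).
  assert (Ht0 : 0 < t) by (unfold t; apply Rdiv_lt_0_compat; lra).
  assert (Ht1 : t < 1) by nra.
  assert (Hy : t * x + (1 - t) * z = y) by nra.
  pose proof (Hf x z t ltac:(unfold Ipos; lra) ltac:(unfold Ipos; lra) ltac:(lra) Ht0 Ht1)
    as Hconv.
  rewrite Hy in Hconv.
  unfold slope.
  apply Rmult_le_reg_r with ((y - x) * (z - y)); [nra|].
  replace ((f y - f x) / (y - x) * ((y - x) * (z - y))) with ((f y - f x) * (z - y))
    by (field; lra).
  replace ((f z - f y) / (z - y) * ((y - x) * (z - y))) with ((f z - f y) * (y - x))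
    by (field; lra).
  assert (H1t : (1 - t) * (z - x) = y - x) by nra.
  nra.
Qed.

Lemma slope_le_deriv_within f b l m :
  deriv_within Ipos f b l -> 0 <= b ->
  (forall k, 0 < k -> m <= slope f b (b + k)) -> m <= l.
Proof.
  intros Hf Hb Hm.
  destruct (Rle_dec m l) as [|Hlt]; [assumption|exfalso].
  destruct (Hf ((m - l) / 2)) as [d [Hd Hfd]]; [lra|].
  specialize (Hm (d / 2) ltac:(lra)).
  specialize (Hfd (b + d / 2) ltac:(unfold Ipos; lra)).
  replace (b + d / 2 - b) with (d / 2) in Hfd by ring.
  rewrite (Rabs_pos_eq (d / 2)) in Hfd by lra.
  specialize (Hfd ltac:(lra)).
  pose proof (Rle_abs (f (b + d / 2) - f b - l * (d / 2))).
  unfold slope in Hm.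
  replace (b + d / 2 - b) with (d / 2) in Hm by ring.
  apply Rmult_le_compat_r with (r := d / 2) in Hm; [|lra].
  replace ((f (b + d / 2) - f b) / (d / 2) * (d / 2)) with (f (b + d / 2) - f b) in Hm
    by (field; lra).
  nra.
Qed.

Lemma strictly_convex_increment_le f b l t s :
  strictly_convex_on Ipos f -> deriv_within Ipos f b l ->
  0 <= t -> t <= s -> s <= b -> f s - f t <= l * (s - t).
Proof.
  intros Hf Hd Ht Hts Hsb.
  destruct (Req_dec t s) as [<-|Hneq]; [lra|].
  assert (Hslope : slope f t s <= l).
  { apply (slope_le_deriv_within f b); [exact Hd | lra |].
    intros k Hk.
    destruct (Req_dec s b) as [<-|Hsb'].
    - apply strictly_convex_slope_le; [exact Hf | lra ..].
    - apply Rle_trans with (slope f s b).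
      + apply strictly_convex_slope_le; [exact Hf | lra ..].
      + apply strictly_convex_slope_le; [exact Hf | lra ..]. }
  unfold slope in Hslope.
  apply Rmult_le_compat_r with (r := s - t) in Hslope; [|lra].
  replace ((f s - f t) / (s - t) * (s - t)) with (f s - f t) in Hslope by (field; lra).
  lra.
Qed.

Definition wage_cost (gamma beta : R) (eta : R -> R) (w : R) : R :=
  w - bstar beta w + gamma * eta (bstar beta w).

Lemma gfun_wage_cost P yH yL u gamma beta C Cp eta a :
  gfun P yH yL u gamma beta C Cp eta a =
  P * yL - wage_cost gamma beta eta (wL u C Cp a)
  + a * (P * yH - P * yL - wage_cost gamma beta eta (wH u C Cp a)
         + wage_cost gamma beta eta (wL u C Cp a)).
Proof. unfold gfun, wage_cost; cbv zeta; ring. Qed.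

Lemma wage_cost_increment gamma beta eta l x y :
  0 < gamma -> 0 <= beta -> gamma * l = 1 ->
  strictly_increasing_on Ipos eta -> strictly_convex_on Ipos eta ->
  deriv_within Ipos eta beta l -> 0 <= x -> x <= y ->
  0 <= wage_cost gamma beta eta y - wage_cost gamma beta eta x <= y - x.
Proof.
  intros Hg Hb Hgl Hinc Hconv Hd Hx Hxy.
  unfold wage_cost, bstar.
  set (bx := Rmin beta x); set (by_ := Rmin beta y).
  assert (Hbxy : 0 <= bx <= by_ /\ by_ <= beta /\ by_ - bx <= y - x)
    by (unfold bx, by_, Rmin; repeat destruct Rle_dec; lra).
  assert (Hup : eta by_ - eta bx <= l * (by_ - bx))
    by (apply (strictly_convex_increment_le eta beta); tauto).
  assert (Hmono : eta bx <= eta by_).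
  { destruct (Req_dec bx by_) as [->|Hneq]; [lra|].
    left; apply Hinc; unfold Ipos; lra. }
  assert (Hgup : gamma * (eta by_ - eta bx) <= by_ - bx).
  { rewrite <- (Rmult_1_l (by_ - bx)), <- Hgl, Rmult_assoc.
    apply Rmult_le_compat_l; lra. }
  assert (Hgpos : 0 <= gamma * (eta by_ - eta bx)) by (apply Rmult_le_pos; lra).
  lra.
Qed.

Lemma nonexpansive_of_increment (F : R -> R) :
  (forall x y, 0 <= x -> x <= y -> 0 <= F y - F x <= y - x) ->
  forall x y, 0 <= x -> 0 <= y -> Rabs (F y - F x) <= Rabs (y - x).
Proof.
  intros HF x y Hx Hy.
  destruct (Rle_dec x y) as [Hxy|Hyx].
  - specialize (HF x y Hx Hxy).
    rewrite !Rabs_pos_eq by lra; lra.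
  - specialize (HF y x Hy ltac:(lra)).
    rewrite <- (Rabs_Ropp (F y - F x)), <- (Rabs_Ropp (y - x)), !Rabs_pos_eq by lra; lra.
Qed.

Lemma wage_cost_above_cap gamma beta eta w :
  beta <= w -> wage_cost gamma beta eta w = w - beta + gamma * eta beta.
Proof. intros Hw; unfold wage_cost, bstar; rewrite Rmin_left by exact Hw; ring. Qed.

Lemma Rmax_0_nonexpansive a b : Rabs (Rmax 0 a - Rmax 0 b) <= Rabs (a - b).
Proof.
  unfold Rmax; repeat destruct Rle_dec; unfold Rabs; repeat destruct Rcase_abs; lra.
Qed.

Lemma wL_littleo u C Cp :
  deriv_within I01 C 0 (Cp 0) -> littleo_right (fun _ => 1) (fun h => Cp h - Cp 0) ->
  littleo_right (fun h => h) (fun h => wL u C Cp h - wL u C Cp 0).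
Proof.
  intros HC HCp.
  apply (littleo_right_le _ (fun h => (C h - C 0 - Cp 0 * h) + - (h * (Cp h - Cp 0)))).
  - apply littleo_right_plus; [exact (deriv_within_I01_littleo _ _ HC)|].
    apply littleo_right_opp, littleo_right_mul_id, HCp.
  - intros h _ _; unfold wL.
    eapply Rle_trans; [apply Rmax_0_nonexpansive|]; right; f_equal; ring.
Qed.

Lemma wH_continuous u C Cp :
  deriv_within I01 C 0 (Cp 0) -> littleo_right (fun _ => 1) (fun h => Cp h - Cp 0) ->
  littleo_right (fun _ => 1) (fun h => wH u C Cp h - wH u C Cp 0).
Proof.
  intros HC HCp.
  apply (littleo_right_le _ (fun h => (wL u C Cp h - wL u C Cp 0) + (Cp h - Cp 0))).
  - apply littleo_right_plus; [|exact HCp].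
    exact (littleo_right_id_1 _ (wL_littleo u C Cp HC HCp)).
  - intros h _ _; unfold wH; right; f_equal; ring.
Qed.

Lemma gfun_right_deriv P yH yL u gamma beta C Cp eta :
  deriv_within I01 C 0 (Cp 0) -> littleo_right (fun _ => 1) (fun h => Cp h - Cp 0) ->
  (forall a, I01 a -> 0 <= Cp a) ->
  (forall x y, 0 <= x -> 0 <= y ->
     Rabs (wage_cost gamma beta eta y - wage_cost gamma beta eta x) <= Rabs (y - x)) ->
  right_deriv (gfun P yH yL u gamma beta C Cp eta) 0
    (P * yH - P * yL - wage_cost gamma beta eta (wH u C Cp 0)
     + wage_cost gamma beta eta (wL u C Cp 0)).
Proof.
  intros HC HCp HCp_nonneg HF.
  set (F := wage_cost gamma beta eta) in *.
  set (wl := wL u C Cp); set (wh := wH u C Cp).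
  assert (Hwl_nonneg : forall a, 0 <= wl a) by (intros; apply Rmax_l).
  assert (Hwh_nonneg : forall a, I01 a -> 0 <= wh a).
  { intros a Ha; unfold wh, wH; fold (wl a).
    pose proof (Hwl_nonneg a); pose proof (HCp_nonneg a Ha); lra. }
  assert (HFwl : littleo_right (fun h => h) (fun h => F (wl h) - F (wl 0))).
  { apply (littleo_right_le _ _ _ (wL_littleo u C Cp HC HCp)).
    intros; apply HF; apply Hwl_nonneg. }
  assert (HFwh : littleo_right (fun _ => 1) (fun h => F (wh h) - F (wh 0))).
  { apply (littleo_right_le _ _ _ (wH_continuous u C Cp HC HCp)).
    intros h Hh Hh1; apply HF; apply Hwh_nonneg; unfold I01; lra. }
  apply right_deriv_of_littleo.
  apply (littleo_right_le _ (fun h =>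
    h * (- (F (wh h) - F (wh 0)) + (F (wl h) - F (wl 0))) + - (F (wl h) - F (wl 0)))).
  - apply littleo_right_plus; [|exact (littleo_right_opp _ _ HFwl)].
    apply littleo_right_mul_id, littleo_right_plus.
    + exact (littleo_right_opp _ _ HFwh).
    + exact (littleo_right_id_1 _ HFwl).
  - intros h _ _; right; f_equal.
    rewrite !gfun_wage_cost; fold F wl wh; ring.
Qed.

Theorem proposition4
  (P yH yL u gamma beta : R) (C Cp Cpp eta etap etapp : R -> R) :
  0 < P -> 0 <= yL -> yL < yH -> 0 < gamma -> gamma <= 1 ->
  C 0 = 0 ->
  strictly_increasing_on I01 C ->
  strictly_convex_on I01 C ->
  (forall a, I01 a -> deriv_within I01 C a (Cp a)) ->
  (forall a, I01 a -> deriv_within I01 Cp a (Cpp a)) ->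
  tends_to_infty_at_1 C ->
  eta 0 = 0 ->
  strictly_increasing_on Ipos eta ->
  strictly_convex_on Ipos eta ->
  (forall x, Ipos x -> deriv_within Ipos eta x (etap x)) ->
  (forall x, Ipos x -> deriv_within Ipos etap x (etapp x)) ->
  0 <= beta -> gamma * etap beta = 1 ->
  exists D, right_deriv (gfun P yH yL u gamma beta C Cp eta) 0 D /\
    (Cp 0 < P * yH - P * yL ->
       0 < D /\
       (forall astar, I01 astar ->
          (forall a, I01 a -> gfun P yH yL u gamma beta C Cp eta a
                              <= gfun P yH yL u gamma beta C Cp eta astar) ->
          0 < astar)) /\
    (0 <= beta -> beta <= u -> 0 < D -> Cp 0 < P * yH - P * yL).
Proof.
  intros _ _ _ Hg _ HC0 HCinc _ HC HCp _ _ Hetainc Hetaconv Heta _ Hb Hbeta.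
  assert (I0 : I01 0) by (unfold I01; lra).
  pose proof (deriv_within_I01_nonneg C Cp HCinc HC) as HCp_nonneg.
  pose proof (HCp_nonneg 0 I0).
  pose proof (fun x y => wage_cost_increment gamma beta eta (etap beta) x y
                Hg Hb Hbeta Hetainc Hetaconv (Heta beta Hb)) as HF.
  pose proof (gfun_right_deriv P yH yL u gamma beta C Cp eta (HC 0 I0)
    (deriv_within_I01_continuous _ _ (HCp 0 I0)) HCp_nonneg
    (nonexpansive_of_increment _ HF)) as Hright.
  assert (Hwl0 : 0 <= wL u C Cp 0) by apply Rmax_l.
  assert (Hwh0 : wH u C Cp 0 = wL u C Cp 0 + Cp 0) by reflexivity.
  eexists; split; [exact Hright|split].
  - intros Hcost.
    assert (HD : 0 < P * yH - P * yL - wage_cost gamma beta eta (wH u C Cp 0)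
                     + wage_cost gamma beta eta (wL u C Cp 0))
      by (pose proof (HF (wL u C Cp 0) (wH u C Cp 0) Hwl0 ltac:(lra)); lra).
    split; [exact HD|].
    intros astar [Hastar _] Hmax.
    destruct (right_deriv_pos_increase _ _ Hright HD) as [h [Hh Hgh]].
    destruct (Req_dec astar 0) as [->|]; [|lra].
    specialize (Hmax h ltac:(unfold I01; lra)); lra.
  - intros _ Hbu HD.
    assert (Hwl : wL u C Cp 0 = u).
    { unfold wL; rewrite HC0, Rmult_0_l, Rminus_0_r, Rplus_0_r.
      apply Rmax_right; lra. }
    rewrite !wage_cost_above_cap in HD by lra; lra.
Qed.
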